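(* Let $F\colon\mathcal{A}\to\mathcal{B}$ be an exceptionally Frobenius functor. Then the canonical map $$\varphi\colon R\xrightarrow{R\eta_L}RFL\xrightarrow{\eta_R^{-1}L}L$$ is an isomorphism.
   Context: All categories are $k$-linear triangulated, all functors exact. $F$ has left adjoint $L$ and right adjoint $R$, with units $\eta_R\colon\mathrm{id}_{\mathcal{A}}\to RF$ and $\eta_L\colon\mathrm{id}_{\mathcal{B}}\to FL$. $F$ is exceptional if it is fully faithful and has both adjoints; in that case $\eta_R$ is an isomorphism. $F$ is exceptionally Frobenius if it is exceptional and there exists some isomorphism $R\cong L$. *)

Set Implicit Arguments.
Unset Strict Implicit.

Record Category := {
  Ob :> Type;
  Hom : Ob -> Ob -> Type;
  cid : forall a, Hom a a;
  comp : forall x y z, Hom y z -> Hom x y -> Hom x z;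
  comp_id_l : forall a b (f : Hom a b), comp (cid b) f = f;
  comp_id_r : forall a b (f : Hom a b), comp f (cid a) = f;
  comp_assoc : forall a b c d (f : Hom c d) (g : Hom b c) (h : Hom a b),
      comp f (comp g h) = comp (comp f g) h
}.
Arguments Hom {c} _ _ : rename.
Arguments cid {c} _ : rename.
Arguments comp {c x y z} _ _ : rename.

Notation "g \o f" := (comp g f) (at level 40, left associativity).

Definition is_iso (C : Category) (a b : C) (f : Hom a b) : Prop :=
  exists g : Hom b a, g \o f = cid a /\ f \o g = cid b.

Record Functor (C D : Category) := {
  fobj :> C -> D;
  fmap : forall a b, Hom a b -> Hom (fobj a) (fobj b);
  fmap_id : forall a, fmap (cid a) = cid (fobj a);
  fmap_comp : forall a b c (g : Hom b c) (f : Hom a b),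
      fmap (g \o f) = fmap g \o fmap f
}.
Arguments fmap {C D} _ {a b} _.

Definition IdF (C : Category) : Functor C C.
Proof.
  refine {| fobj := fun a => a; fmap := fun a b f => f |}; reflexivity.
Defined.

Definition CompF (C D E : Category) (G : Functor D E) (F : Functor C D)
  : Functor C E.
Proof.
  refine {| fobj := fun a => G (F a);
            fmap := fun a b f => fmap G (fmap F f) |}.
  - intros a. rewrite !fmap_id. reflexivity.
  - intros a b c g f. rewrite !fmap_comp. reflexivity.
Defined.

Record NatTrans (C D : Category) (F G : Functor C D) := {
  comp_nt :> forall a, Hom (F a) (G a);
  naturality : forall a b (f : Hom a b),
      comp_nt b \o fmap F f = fmap G f \o comp_nt a
}.

Definition is_nat_iso (C D : Category) (F G : Functor C D)
  (t : NatTrans F G) : Prop := forall a, is_iso (t a).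

Definition fully_faithful (C D : Category) (F : Functor C D) : Prop :=
  forall a b, exists g : Hom (F a) (F b) -> Hom a b,
    (forall f, g (fmap F f) = f) /\ (forall h, fmap F (g h) = h).

Record Adjunction (C D : Category) (Lf : Functor C D) (Rf : Functor D C) := {
  adj_unit : NatTrans (IdF C) (CompF Rf Lf);
  adj_counit : NatTrans (CompF Lf Rf) (IdF D);
  triangle_L : forall c, adj_counit (Lf c) \o fmap Lf (adj_unit c) = cid (Lf c);
  triangle_R : forall d, fmap Rf (adj_counit d) \o adj_unit (Rf d) = cid (Rf d)
}.

(* The composite φ = η_R⁻¹L ∘ Rη_L is an isomorphism as soon as Rη_L is.
   Since F is fully faithful, the counit of L ⊣ F is invertible, so by the
   triangle identity Lη_L is its inverse and hence an isomorphism; the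
   natural isomorphism R ≅ L then transports this to Rη_L. *)
Set Implicit Arguments.
Unset Strict Implicit.

Section Isomorphisms.
Variable C : Category.

Lemma is_iso_comp (x y z : C) (f : Hom x y) (g : Hom y z) :
  is_iso f -> is_iso g -> is_iso (g \o f).
Proof.
  intros [f' [Hf1 Hf2]] [g' [Hg1 Hg2]].
  exists (f' \o g'); split.
  - rewrite comp_assoc, <- (comp_assoc f' g' g), Hg1, comp_id_r. exact Hf1.
  - rewrite comp_assoc, <- (comp_assoc g f f'), Hf2, comp_id_r. exact Hg2.
Qed.

Lemma is_iso_inverse (x y : C) (f : Hom x y) (g : Hom y x) :
  g \o f = cid x -> f \o g = cid y -> is_iso g.
Proof. intros Hgf Hfg. exists f. split; assumption. Qed.

Lemma is_iso_section (x y : C) (f : Hom x y) (g : Hom y x) :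
  g \o f = cid x -> is_iso g -> is_iso f.
Proof.
  intros Hgf [g' [Hg'g Hgg']].
  assert (Ef : f = g').
  { rewrite <- (comp_id_l f), <- Hg'g, <- comp_assoc, Hgf, comp_id_r.
    reflexivity. }
  rewrite Ef. exact (is_iso_inverse Hg'g Hgg').
Qed.

End Isomorphisms.

Lemma nat_iso_reflects_fmap_iso (C D : Category) (F G : Functor C D)
  (t : NatTrans F G) (a b : C) (f : Hom a b) :
  is_nat_iso t -> is_iso (fmap G f) -> is_iso (fmap F f).
Proof.
  intros Ht HGf. destruct (Ht b) as [tb' [Htb'tb Htbtb']].
  assert (Ef : fmap F f = tb' \o (fmap G f \o t a)).
  { rewrite <- (naturality t), comp_assoc, Htb'tb, comp_id_l. reflexivity. }
  rewrite Ef. apply is_iso_comp.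
  - apply is_iso_comp; [apply Ht | exact HGf].
  - exact (is_iso_inverse Htb'tb Htbtb').
Qed.

Lemma fully_faithful_fmap_inj (C D : Category) (F : Functor C D)
  (a b : C) (f g : Hom a b) :
  fully_faithful F -> fmap F f = fmap F g -> f = g.
Proof.
  intros HFF Efg. destruct (HFF a b) as [pre [Hpre _]].
  rewrite <- (Hpre f), <- (Hpre g), Efg. reflexivity.
Qed.

Section FullyFaithfulRightAdjoint.
Variables (C D : Category) (Lf : Functor D C) (Rf : Functor C D).
Variable adj : Adjunction Lf Rf.

Lemma adj_transpose_inj (d : D) (c : C) (h1 h2 : Hom (Lf d) c) :
  fmap Rf h1 \o adj_unit adj d = fmap Rf h2 \o adj_unit adj d -> h1 = h2.
Proof.
  intros E.
  assert (Etransp : forall h : Hom (Lf d) c,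
    h = adj_counit adj c \o fmap Lf (fmap Rf h \o adj_unit adj d)).
  { intros h. rewrite fmap_comp, comp_assoc.
    pose proof (naturality (adj_counit adj) h) as N. cbn in N |- *.
    rewrite N, <- comp_assoc.
    pose proof (triangle_L adj d) as T. cbn in T.
    rewrite T, comp_id_r. reflexivity. }
  rewrite (Etransp h1), (Etransp h2), E. reflexivity.
Qed.

Hypothesis HFF : fully_faithful Rf.

Lemma counit_is_iso (c : C) : is_iso (adj_counit adj c).
Proof.
  pose proof (triangle_R adj c) as T. cbn in T.
  destruct (HFF c (Lf (Rf c))) as [pre [_ Hpre]].
  exists (pre (adj_unit adj (Rf c))). split.
  - apply adj_transpose_inj. rewrite fmap_comp, fmap_id, comp_id_l.
    cbn. rewrite Hpre, <- comp_assoc, T, comp_id_r. reflexivity.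
  - apply (fully_faithful_fmap_inj HFF).
    rewrite fmap_comp, fmap_id, Hpre. exact T.
Qed.

Lemma fmap_unit_is_iso (d : D) : is_iso (fmap Lf (adj_unit adj d)).
Proof.
  apply (is_iso_section (g := adj_counit adj (Lf d))).
  - exact (triangle_L adj d).
  - apply counit_is_iso.
Qed.

End FullyFaithfulRightAdjoint.

Theorem proposition3p7 (A B : Category) (F : Functor A B)
  (L R : Functor B A)
  (adjL : Adjunction L F)   (* L ⊣ F, unit eta_L : id_B -> F L *)
  (adjR : Adjunction F R)   (* F ⊣ R, unit eta_R : id_A -> R F *)
  (* F is exceptional: fully faithful with both adjoints *)
  (HFF : fully_faithful F)
  (* F is exceptionally Frobenius: some isomorphism R ≅ L *)
  (HFrob : exists t : NatTrans R L, is_nat_iso t)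
  (* the inverse of the (invertible) unit eta_R *)
  (etaRinv : forall a : A, Hom (R (F a)) a)
  (HetaRinv : forall a : A,
      etaRinv a \o adj_unit adjR a = cid a /\
      adj_unit adjR a \o etaRinv a = cid (R (F a))) :
  (* phi_b := (eta_R^{-1} L)_b ∘ (R eta_L)_b : R b -> R F L b -> L b *)
  forall b : B, is_iso (etaRinv (L b) \o fmap R (adj_unit adjL b)).
Proof.
  intros b. destruct HFrob as [t Ht].
  apply is_iso_comp.
  - apply (nat_iso_reflects_fmap_iso Ht).
    exact (fmap_unit_is_iso adjL HFF b).
  - destruct (HetaRinv (L b)) as [Hinv_unit Hunit_inv].
    exact (is_iso_inverse Hinv_unit Hunit_inv).
Qed.
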